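(* For every term $t\in T^{*,\circ}$, one has $t =_{ALD} I(t)[J(t)]$.
   Context: For $n\ge1$, $T_n^*$ (resp. $T_n^\circ$, $T_n^{*,\circ}$) is the set of terms built from variables $x_1,\dots,x_n$ using the binary operator $*$ (resp. $\circ$, resp. both); $T^*=\bigcup_nT_n^*$, $T^{*,\circ}=\bigcup_nT_n^{*,\circ}$, $x$ denotes $x_1$, and $T_1^\circ$ is the set of $\circ$-terms in $x$. The size of a term is its number of occurrences of variables. $=_{ALD}$ is the congruence on $T^{*,\circ}$ generated by all instances of $x*(y*z)=(x*y)*(x*z)$, $x*(y*z)=(x\circ y)*z$ and $x*(y\circ z)=(x*y)\circ(x*z)$. For a set $S$ with binary operation $*$, $\widehat S$ denotes the finite nonempty sequences over $S$, $\frown$ concatenation, and $\vec s\mathbin{\vec{*}}\vec t=(s_1*\cdots*s_p*t_1,\dots,s_1*\cdots*s_p*t_q)$ ($p,q$ the lengths; parentheses added on the right). For $t\in T^{*,\circ}$, $I(t)\in T_1^\circ$ and $J(t)\in\widehat{T^*}$ are defined inductively: if $t$ is a variable, $(I(t),J(t))=(x,(t))$; if $t=t_1*t_2$, $(I(t),J(t))=(I(t_2),J(t_1)\mathbin{\vec{*}}J(t_2))$; if $t=t_1\circ t_2$, $(I(t),J(t))=(I(t_1)\circ I(t_2),J(t_1)\frown J(t_2))$ (the size of $I(t)$ equals the length of $J(t)$). For $v\in T_1^\circ$ of size $p$ and a length-$p$ sequence $\vec t=(t_1,\dots,t_p)$ of terms of $T^*$, $v[\vec t]$ denotes the term obtained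 from $v$ by substituting $t_1,\dots,t_p$ for the occurrences of the variable in $v$, enumerated from left to right. *)

From Stdlib Require Import List.
Import ListNotations.

(* Terms built from variables x_1, x_2, ... with two binary operators * and o.
   [Var i] denotes the variable x_(i+1); so [Var 0] is x = x_1. *)
Inductive term : Type :=
| Var : nat -> term
| Star : term -> term -> term
| Circ : term -> term -> term.

Definition x : term := Var 0.

Inductive ald_eq : term -> term -> Prop :=
| ald_LD  : forall a b c, ald_eq (Star a (Star b c)) (Star (Star a b) (Star a c))
| ald_A   : forall a b c, ald_eq (Star a (Star b c)) (Star (Circ a b) c)
| ald_D   : forall a b c, ald_eq (Star a (Circ b c)) (Circ (Star a b) (Star a c))
| ald_refl : forall a, ald_eq a a
| ald_sym : forall a b, ald_eq a b -> ald_eq b a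
| ald_trans : forall a b c, ald_eq a b -> ald_eq b c -> ald_eq a c
| ald_Star : forall a a' b b', ald_eq a a' -> ald_eq b b' -> ald_eq (Star a b) (Star a' b')
| ald_Circ : forall a a' b b', ald_eq a a' -> ald_eq b b' -> ald_eq (Circ a b) (Circ a' b').

Fixpoint star_prefix (s : list term) (u : term) : term :=
  match s with
  | [] => u
  | a :: s' => Star a (star_prefix s' u)
  end.

Definition vec_star (s t : list term) : list term :=
  map (star_prefix s) t.

Fixpoint I (t : term) : term :=
  match t with
  | Var _ => x
  | Star _ t2 => I t2
  | Circ t1 t2 => Circ (I t1) (I t2)
  end.

Fixpoint J (t : term) : list term :=
  match t with
  | Var _ => [t]
  | Star t1 t2 => vec_star (J t1) (J t2)
  | Circ t1 t2 => J t1 ++ J t2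
  end.

(* Substitution of a sequence into the variable occurrences of v, enumerated
   left to right: returns the resulting term and the unused suffix of the
   sequence.  Only meaningful when size v = length of the sequence (missing
   entries, which never occur in that case, default to the variable itself). *)
Fixpoint subst_aux (v : term) (ts : list term) : term * list term :=
  match v with
  | Var i => match ts with
             | [] => (Var i, [])
             | u :: ts' => (u, ts')
             end
  | Star a b => let (a', r1) := subst_aux a ts in
                let (b', r2) := subst_aux b r1 in (Star a' b', r2)
  | Circ a b => let (a', r1) := subst_aux a ts in
                let (b', r2) := subst_aux b r1 in (Circ a' b', r2)
  end.

Definition subst (v : term) (ts : list term) : term := fst (subst_aux v ts).

(* For
   t = t1 * t2, the laws x*(y*z) = (x*y)*(x*z) and x*(y o z) = (x*y) o (x*z)
   let left multiplication by t1 enter every leaf of I(t2)[J(t2)], and the law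
   x*(y*z) = (x o y)*z turns t1 * u = I(t1)[J(t1)] * u into the right-nested
   product of the entries of J(t1) with u, because I(t1) is a o-term. *)

From Stdlib Require Import List Lia Setoid Morphisms.
Import ListNotations.

#[export] Instance ald_eq_Equivalence : Equivalence ald_eq.
Proof.
  split.
  - exact ald_refl.
  - exact ald_sym.
  - exact ald_trans.
Qed.

#[export] Instance Star_ald_eq_Proper : Proper (ald_eq ==> ald_eq ==> ald_eq) Star.
Proof. intros a a' Ha b b' Hb. now apply ald_Star. Qed.

#[export] Instance Circ_ald_eq_Proper : Proper (ald_eq ==> ald_eq ==> ald_eq) Circ.
Proof. intros a a' Ha b b' Hb. now apply ald_Circ. Qed.

Fixpoint term_size (v : term) : nat :=
  match v with
  | Var _ => 1
  | Star a b | Circ a b => term_size a + term_size b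
  end.

Fixpoint circ_term (v : term) : Prop :=
  match v with
  | Var _ => True
  | Star _ _ => False
  | Circ a b => circ_term a /\ circ_term b
  end.

Lemma split_length {A : Type} (l : list A) (m n : nat) :
  length l = m + n ->
  exists l1 l2, l = l1 ++ l2 /\ length l1 = m /\ length l2 = n.
Proof.
  intros Hlen. exists (firstn m l), (skipn m l).
  rewrite firstn_skipn, length_firstn, length_skipn. repeat split; lia.
Qed.

Lemma subst_aux_app (v : term) (ts r : list term) :
  length ts = term_size v -> subst_aux v (ts ++ r) = (subst v ts, r).
Proof.
  revert ts r.
  induction v as [i | v1 IH1 v2 IH2 | v1 IH1 v2 IH2]; intros ts r Hlen;
    cbn in Hlen;
    [destruct ts as [| u [| ? ?]]; cbn in Hlen; [lia | reflexivity | lia] | |].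
  all: destruct (split_length ts _ _ Hlen) as (ts1 & ts2 & -> & H1 & H2);
    pose proof (IH2 ts2 [] H2) as E2; rewrite app_nil_r in E2;
    unfold subst; cbn; rewrite <- app_assoc, !IH1, IH2, E2 by assumption;
    reflexivity.
Qed.

Lemma subst_aux_exact (v : term) (ts : list term) :
  length ts = term_size v -> subst_aux v ts = (subst v ts, []).
Proof. intros Hlen. rewrite <- (app_nil_r ts) at 1. now apply subst_aux_app. Qed.

Lemma subst_Star (v1 v2 : term) (ts1 ts2 : list term) :
  length ts1 = term_size v1 -> length ts2 = term_size v2 ->
  subst (Star v1 v2) (ts1 ++ ts2) = Star (subst v1 ts1) (subst v2 ts2).
Proof.
  intros H1 H2. unfold subst at 1; cbn.
  now rewrite subst_aux_app, subst_aux_exact.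
Qed.

Lemma subst_Circ (v1 v2 : term) (ts1 ts2 : list term) :
  length ts1 = term_size v1 -> length ts2 = term_size v2 ->
  subst (Circ v1 v2) (ts1 ++ ts2) = Circ (subst v1 ts1) (subst v2 ts2).
Proof.
  intros H1 H2. unfold subst at 1; cbn.
  now rewrite subst_aux_app, subst_aux_exact.
Qed.

Lemma star_prefix_app (s1 s2 : list term) (u : term) :
  star_prefix (s1 ++ s2) u = star_prefix s1 (star_prefix s2 u).
Proof. induction s1 as [| a s1 IH]; cbn; congruence. Qed.

Lemma Star_subst (v : term) (ts : list term) (a : term) (f : term -> term) :
  (forall u, ald_eq (Star a u) (f u)) -> length ts = term_size v ->
  ald_eq (Star a (subst v ts)) (subst v (map f ts)).
Proof.
  intros Hf. revert ts.
  induction v as [i | v1 IH1 v2 IH2 | v1 IH1 v2 IH2]; intros ts Hlen; cbn in Hlen.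
  - destruct ts as [| u [| ? ?]]; cbn in Hlen; try lia. apply Hf.
  - destruct (split_length ts _ _ Hlen) as (ts1 & ts2 & -> & H1 & H2).
    rewrite map_app, !subst_Star by now rewrite ?length_map.
    now rewrite ald_LD, IH1, IH2.
  - destruct (split_length ts _ _ Hlen) as (ts1 & ts2 & -> & H1 & H2).
    rewrite map_app, !subst_Circ by now rewrite ?length_map.
    now rewrite ald_D, IH1, IH2.
Qed.

Lemma subst_circ_Star (v : term) (ts : list term) (u : term) :
  circ_term v -> length ts = term_size v ->
  ald_eq (Star (subst v ts) u) (star_prefix ts u).
Proof.
  revert ts u.
  induction v as [i | v1 IH1 v2 IH2 | v1 IH1 v2 IH2]; intros ts u Hv Hlen;
    cbn in Hv, Hlen.
  - destruct ts as [| w [| ? ?]]; cbn in Hlen; try lia. reflexivity.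
  - contradiction.
  - destruct Hv as [Hv1 Hv2].
    destruct (split_length ts _ _ Hlen) as (ts1 & ts2 & -> & H1 & H2).
    rewrite subst_Circ, star_prefix_app by assumption.
    now rewrite <- ald_A, IH2, IH1.
Qed.

Lemma I_circ_term (t : term) : circ_term (I t).
Proof. induction t; cbn; auto. Qed.

Lemma J_length (t : term) : length (J t) = term_size (I t).
Proof.
  induction t as [i | t1 IH1 t2 IH2 | t1 IH1 t2 IH2]; cbn.
  - reflexivity.
  - unfold vec_star. now rewrite length_map.
  - rewrite length_app. lia.
Qed.

Theorem lemma1p12 : forall t : term, ald_eq t (subst (I t) (J t)).
Proof.
  induction t as [i | t1 IH1 t2 IH2 | t1 IH1 t2 IH2]; cbn [I J].
  - reflexivity.
  - unfold vec_star. rewrite IH2 at 1.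
    apply Star_subst; [| apply J_length].
    intros u. rewrite IH1 at 1.
    apply subst_circ_Star; [apply I_circ_term | apply J_length].
  - rewrite subst_Circ by apply J_length.
    now rewrite <- IH1, <- IH2.
Qed.
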